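(* Let $V$ be real-valued and absolutely continuous on $[0,\pi]$ and let $a\in(0,\pi]$. There are constants $C_1>0$ (depending on $V$) and $C_2,C_3>0$ (depending on $V$ and $a$) such that for all $z\in\mathbb C$ and $n\in\mathbb N$: $$\left|\int_0^\pi F(x,z)\cos(nx)\,dx\right|\le C_1\frac{e^{\pi|\operatorname{Im}\sqrt z|}}{n^2}\left(1+\frac{1+|z|}{1+\pi|z|^{1/2}}\right),$$ $$\left|\int_0^a\rho(x)\cos(\sqrt z\,x)\sin(nx)\,dx\right|\le C_2\frac{e^{\pi|\operatorname{Im}\sqrt z|}}{n}\left(1+\frac{|z|}{1+\pi|z|^{1/2}}\right),$$ $$\left|\int_0^a\rho(x)F(x,z)\sin(nx)\,dx\right|\le C_3\frac{e^{\pi|\operatorname{Im}\sqrt z|}}{n}\left(1+\frac{1}{1+\pi|z|^{1/2}}\right).$$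
   Context: $\sqrt{\cdot}$ is the principal branch. $\xi(x,z)$ is the solution of $-\xi''+V\xi=z\xi$, $\xi(0,z)=1$, $\xi'(0,z)=0$. $F(x,z):=\xi(x,z)-\cos(\sqrt z\,x)$ and $\rho(x):=\frac12\int_0^xV(y)\,dy-\frac{x}{2\pi}\int_0^\pi V(y)\,dy$ for $x\in[0,\pi]$. *)

From Stdlib Require Import Reals Lra List ClassicalEpsilon.
Open Scope R_scope.

Definition Cx : Type := (R * R)%type.
Definition Re (z : Cx) : R := fst z.
Definition Im (z : Cx) : R := snd z.
Definition Cmod (z : Cx) : R := sqrt (Re z ^ 2 + Im z ^ 2).
Definition Cadd (z w : Cx) : Cx := (Re z + Re w, Im z + Im w).
Definition Csub (z w : Cx) : Cx := (Re z - Re w, Im z - Im w).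
Definition Cmul (z w : Cx) : Cx :=
  (Re z * Re w - Im z * Im w, Re z * Im w + Im z * Re w).
Definition RtoC (r : R) : Cx := (r, 0).
Definition Cscal (r : R) (z : Cx) : Cx := (r * Re z, r * Im z).

(* Principal branch of the square root: argument in (-pi, pi], so the
   result has Re >= 0 (and Im >= 0 on the negative real axis). *)
Definition Csqrt (z : Cx) : Cx :=
  (sqrt ((Cmod z + Re z) / 2),
   (if Rle_dec 0 (Im z) then 1 else -1) * sqrt ((Cmod z - Re z) / 2)).

(* cos(p + i q) = cos p cosh q - i sin p sinh q *)
Definition Ccos (w : Cx) : Cx :=
  (cos (Re w) * cosh (Im w), - (sin (Re w) * sinh (Im w))).

(* ---- Total Riemann integral (0 if not Riemann integrable) ---- *)
Definition Rint (f : R -> R) (a b : R) : R :=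
  match excluded_middle_informative (inhabited (Riemann_integrable f a b)) with
  | left H => RiemannInt (epsilon H (fun _ => True))
  | right _ => 0
  end.

Definition Cint (f : R -> Cx) (a b : R) : Cx :=
  (Rint (fun x => Re (f x)) a b, Rint (fun x => Im (f x)) a b).

(* chain lo hi l : l = [(a1,b1);...;(ak,bk)] with lo <= a1 <= b1 <= a2 <= ... <= bk <= hi,
   i.e. a finite family of non-overlapping subintervals of [lo,hi]. *)
Fixpoint chain (lo hi : R) (l : list (R * R)) : Prop :=
  match l with
  | nil => lo <= hi
  | (a, b) :: t => lo <= a /\ a <= b /\ chain b hi t
  end.

Fixpoint sumlen (l : list (R * R)) : R :=
  match l with nil => 0 | (a, b) :: t => (b - a) + sumlen t end.

Fixpoint sumvar (V : R -> R) (l : list (R * R)) : R :=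
  match l with nil => 0 | (a, b) :: t => Rabs (V b - V a) + sumvar V t end.

Definition abs_continuous_on (V : R -> R) (a b : R) : Prop :=
  forall eps, 0 < eps -> exists delta, 0 < delta /\
    forall l, chain a b l -> sumlen l < delta -> sumvar V l < eps.

(* xi solves -xi'' + V xi = z xi on [0,pi], xi(0)=1, xi'(0)=0;
   dxi is its x-derivative. *)
Definition is_xi (V : R -> R) (xi dxi : R -> Cx -> Cx) : Prop :=
  forall z : Cx,
    xi 0 z = RtoC 1 /\ dxi 0 z = RtoC 0 /\
    forall x, 0 <= x <= PI ->
      derivable_pt_lim (fun t => Re (xi t z)) x (Re (dxi x z)) /\
      derivable_pt_lim (fun t => Im (xi t z)) x (Im (dxi x z)) /\
      derivable_pt_lim (fun t => Re (dxi t z)) x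
        (Re (Cmul (Csub (RtoC (V x)) z) (xi x z))) /\
      derivable_pt_lim (fun t => Im (dxi t z)) x
        (Im (Cmul (Csub (RtoC (V x)) z) (xi x z))).

Definition Ffun (xi : R -> Cx -> Cx) (x : R) (z : Cx) : Cx :=
  Csub (xi x z) (Ccos (Cscal x (Csqrt z))).

Definition rho (V : R -> R) (x : R) : R :=
  / 2 * Rint V 0 x - x / (2 * PI) * Rint V 0 PI.

From Stdlib Require Import Reals Lra Psatz ClassicalEpsilon.
From Coquelicot Require Import Rcomplements Hierarchy Derive RInt RInt_analysis AutoDerive.
From Coquelicot Require Complex.
Open Scope R_scope.

(* [F] solves [F'' + z F = V xi] with [F(0) = F'(0) = 0].  Writing [z = s^2], variation of
   constants gives [e^{-|Im s| x} |F' +- i s F| <= int_0^x e^{-|Im s| t} |V xi|], and since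
   [|V xi| <= sup|V| (|F| + e^{|Im s| t})], Gronwall's inequality bounds [F], [s F] and [F'] by a
   constant times [e^{|Im s| x}].  The three estimates then follow by integrating by parts:
   twice against [cos (n x)] (the factor [|z|] comes from [F'' = V xi - z F]), and once against
   [rho (x) sin (n x)], using [rho 0 = 0] and [|rho'| <= sup |V|]. *)

(** * Complex-valued functions of a real variable *)

Lemma Cmod_ge0 a : 0 <= Cmod a.
Proof. exact (Complex.Cmod_ge_0 a). Qed.

Lemma Cmod_0 : Cmod (0, 0) = 0.
Proof. exact Complex.Cmod_0. Qed.

Lemma Cmod_Cmul a b : Cmod (Cmul a b) = Cmod a * Cmod b.
Proof. exact (Complex.Cmod_mult a b). Qed.

Lemma Cmod_Cadd_le a b : Cmod (Cadd a b) <= Cmod a + Cmod b.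
Proof. exact (Complex.Cmod_triangle a b). Qed.

Lemma Cmod_Cscal r a : Cmod (Cscal r a) = Rabs r * Cmod a.
Proof.
  replace (Cscal r a) with (Cmul (RtoC r) a)
    by (unfold Cmul, Cscal, RtoC, Re, Im; simpl; f_equal; ring).
  rewrite Cmod_Cmul. f_equal. exact (Complex.Cmod_R r).
Qed.

Lemma Cmod_Csub_le a b : Cmod (Csub a b) <= Cmod a + Cmod b.
Proof.
  replace (Csub a b) with (Cadd a (Cscal (-1) b))
    by (unfold Cadd, Csub, Cscal, Re, Im; simpl; f_equal; ring).
  rewrite <- (Rmult_1_l (Cmod b)), <- (Rabs_R1), <- Rabs_Ropp, <- Cmod_Cscal.
  apply Cmod_Cadd_le.
Qed.

Lemma Cmod_Cscal_le r a c B : Rabs r <= c -> Cmod a <= B -> Cmod (Cscal r a) <= c * B.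
Proof.
  intros Hr Ha. rewrite Cmod_Cscal.
  apply Rmult_le_compat; auto using Rabs_pos, Cmod_ge0.
Qed.

Lemma Cmod_le_sqr a b : 0 <= b -> Re a ^ 2 + Im a ^ 2 <= b ^ 2 -> Cmod a <= b.
Proof.
  intros Hb H. unfold Cmod. rewrite <- (sqrt_pow2 b Hb). now apply sqrt_le_1_alt.
Qed.

Definition is_Cderive (f : R -> Cx) (x : R) (l : Cx) :=
  is_derive (fun t => fst (f t)) x (fst l) /\ is_derive (fun t => snd (f t)) x (snd l).

Definition Ccontinuous (f : R -> Cx) (x : R) :=
  continuity_pt (fun t => fst (f t)) x /\ continuity_pt (fun t => snd (f t)) x.

Lemma is_derive_eq_l (f : R -> R) x (l l' : R) : is_derive f x l -> l = l' -> is_derive f x l'.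
Proof. now intros H <-. Qed.

Lemma is_derive_Rmult (f g : R -> R) x a b : is_derive f x a -> is_derive g x b ->
  is_derive (fun t => f t * g t) x (a * g x + f x * b).
Proof. exact (is_derive_mult f g x a b). Qed.

Lemma is_derive_Rplus (f g : R -> R) x a b : is_derive f x a -> is_derive g x b ->
  is_derive (fun t => f t + g t) x (a + b).
Proof. exact (is_derive_plus f g x a b). Qed.

Lemma is_derive_Rminus (f g : R -> R) x a b : is_derive f x a -> is_derive g x b ->
  is_derive (fun t => f t - g t) x (a - b).
Proof. exact (is_derive_minus f g x a b). Qed.

Lemma is_derive_Rconst (c x : R) : is_derive (fun _ => c) x 0.
Proof. apply is_derive_Reals, derivable_pt_lim_const. Qed.

Lemma is_derive_continuity_pt (f : R -> R) x l : is_derive f x l -> continuity_pt f x.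
Proof.
  intros H. apply continuity_pt_filterlim, (ex_derive_continuous f x). now exists l.
Qed.

Lemma is_Cderive_eq_l f x l l' : is_Cderive f x l -> l = l' -> is_Cderive f x l'.
Proof. now intros H <-. Qed.

Lemma is_Cderive_Cadd f g x a b : is_Cderive f x a -> is_Cderive g x b ->
  is_Cderive (fun t => Cadd (f t) (g t)) x (Cadd a b).
Proof. intros [] []; split; simpl; now apply is_derive_Rplus. Qed.

Lemma is_Cderive_Csub f g x a b : is_Cderive f x a -> is_Cderive g x b ->
  is_Cderive (fun t => Csub (f t) (g t)) x (Csub a b).
Proof. intros [] []; split; simpl; now apply is_derive_Rminus. Qed.

Lemma is_Cderive_Cmul f g x a b : is_Cderive f x a -> is_Cderive g x b ->
  is_Cderive (fun t => Cmul (f t) (g t)) x (Cadd (Cmul a (g x)) (Cmul (f x) b)).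
Proof.
  intros [Ha1 Ha2] [Hb1 Hb2]; split; simpl.
  - eapply is_derive_eq_l; [apply is_derive_Rminus; apply is_derive_Rmult; eauto|].
    unfold Re, Im; simpl; ring.
  - eapply is_derive_eq_l; [apply is_derive_Rplus; apply is_derive_Rmult; eauto|].
    unfold Re, Im; simpl; ring.
Qed.

Lemma is_Cderive_Cscal (r : R -> R) f x dr a : is_derive r x dr -> is_Cderive f x a ->
  is_Cderive (fun t => Cscal (r t) (f t)) x (Cadd (Cscal dr (f x)) (Cscal (r x) a)).
Proof.
  intros Hr [Ha1 Ha2]; split; simpl;
    (eapply is_derive_eq_l; [apply is_derive_Rmult; eauto|]; unfold Re, Im; simpl; ring).
Qed.

Lemma is_Cderive_const c x : is_Cderive (fun _ => c) x (0, 0).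
Proof. split; apply is_derive_Rconst. Qed.

Lemma is_Cderive_Ccontinuous f x l : is_Cderive f x l -> Ccontinuous f x.
Proof. intros [H1 H2]; split; eapply is_derive_continuity_pt; eauto. Qed.

Lemma Ccontinuous_Cadd f g x : Ccontinuous f x -> Ccontinuous g x ->
  Ccontinuous (fun t => Cadd (f t) (g t)) x.
Proof. intros [] []; split; simpl; now apply continuity_pt_plus. Qed.

Lemma Ccontinuous_Csub f g x : Ccontinuous f x -> Ccontinuous g x ->
  Ccontinuous (fun t => Csub (f t) (g t)) x.
Proof. intros [] []; split; simpl; now apply continuity_pt_minus. Qed.

Lemma Ccontinuous_Cmul f g x : Ccontinuous f x -> Ccontinuous g x ->
  Ccontinuous (fun t => Cmul (f t) (g t)) x.
Proof.
  intros [] []; split; simpl.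
  - apply continuity_pt_minus; now apply continuity_pt_mult.
  - apply continuity_pt_plus; now apply continuity_pt_mult.
Qed.

Lemma Ccontinuous_Cscal (r : R -> R) f x : continuity_pt r x -> Ccontinuous f x ->
  Ccontinuous (fun t => Cscal (r t) (f t)) x.
Proof. intros ? []; split; simpl; now apply continuity_pt_mult. Qed.

Lemma Ccontinuous_const c x : Ccontinuous (fun _ => c) x.
Proof. split; now apply continuity_pt_const. Qed.

Lemma continuity_pt_Cmod f x : Ccontinuous f x -> continuity_pt (fun t => Cmod (f t)) x.
Proof.
  intros [H1 H2]. unfold Cmod.
  apply (continuity_pt_comp (fun t => Re (f t) ^ 2 + Im (f t) ^ 2) sqrt x).
  - apply continuity_pt_plus; apply continuity_pt_mult; auto;
      (apply continuity_pt_mult; [auto|now apply continuity_pt_const]).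
  - apply continuity_pt_sqrt. nra.
Qed.

Definition CRInt (f : R -> Cx) a b : Cx :=
  (RInt (fun t => fst (f t)) a b, RInt (fun t => snd (f t)) a b).

Lemma ex_RInt_continuity_pt (f : R -> R) a b : a <= b ->
  (forall x, a <= x <= b -> continuity_pt f x) -> ex_RInt f a b.
Proof.
  intros Hab H. apply (ex_RInt_continuous (V := R_CompleteNormedModule)).
  rewrite Rmin_left, Rmax_right by lra. intros; now apply continuity_pt_filterlim, H.
Qed.

Lemma Rint_RInt f a b : ex_RInt f a b -> Rint f a b = RInt f a b.
Proof.
  intros H. unfold Rint. destruct excluded_middle_informative as [i|n].
  - now rewrite (RInt_Reals f a b (epsilon i (fun _ => True))).
  - exfalso. apply n. constructor. now apply ex_RInt_Reals_0.
Qed.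

(* [Cint] is built on [Rint], which is [0] on non-integrable functions; continuity of [g]
   rules that case out. *)
Lemma Cint_CRInt f g a b : a <= b -> (forall x, a <= x <= b -> f x = g x) ->
  (forall x, a <= x <= b -> Ccontinuous g x) -> Cint f a b = CRInt g a b.
Proof.
  intros Hab E Hg. unfold Cint, CRInt, Re, Im.
  assert (Q : forall x, Rmin a b < x < Rmax a b -> f x = g x).
  { rewrite Rmin_left, Rmax_right by lra. intros; apply E; lra. }
  assert (E1 : ex_RInt (fun t => fst (g t)) a b)
    by (apply ex_RInt_continuity_pt; auto; intros; apply Hg; auto).
  assert (E2 : ex_RInt (fun t => snd (g t)) a b)
    by (apply ex_RInt_continuity_pt; auto; intros; apply Hg; auto).
  rewrite (Rint_RInt (fun x => fst (f x))), (Rint_RInt (fun x => snd (f x))).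
  - rewrite (RInt_ext (fun x => fst (f x)) (fun t => fst (g t)) a b),
      (RInt_ext (fun x => snd (f x)) (fun t => snd (g t)) a b); [reflexivity| |];
      intros; now rewrite Q.
  - eapply ex_RInt_ext; [|exact E2]. intros; now rewrite Q.
  - eapply ex_RInt_ext; [|exact E1]. intros; now rewrite Q.
Qed.

Lemma CRInt_derive f df a b : a <= b -> (forall x, a <= x <= b -> is_Cderive f x (df x)) ->
  (forall x, a <= x <= b -> Ccontinuous df x) -> CRInt df a b = Csub (f b) (f a).
Proof.
  intros Hab HD HC. unfold CRInt, Csub, Re, Im. f_equal; apply is_RInt_unique.
  - apply (is_RInt_derive (fun t => fst (f t)) (fun t => fst (df t)));
      rewrite Rmin_left, Rmax_right by lra; intros.
    + apply HD; auto.
    + apply continuity_pt_filterlim, HC; auto.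
  - apply (is_RInt_derive (fun t => snd (f t)) (fun t => snd (df t)));
      rewrite Rmin_left, Rmax_right by lra; intros.
    + apply HD; auto.
    + apply continuity_pt_filterlim, HC; auto.
Qed.

Lemma CRInt_Csub f g a b : a <= b -> (forall x, a <= x <= b -> Ccontinuous f x) ->
  (forall x, a <= x <= b -> Ccontinuous g x) ->
  CRInt (fun t => Csub (f t) (g t)) a b = Csub (CRInt f a b) (CRInt g a b).
Proof.
  intros Hab Hf Hg. unfold CRInt, Csub, Re, Im; simpl.
  f_equal; apply (RInt_minus (V := R_CompleteNormedModule));
    apply ex_RInt_continuity_pt; auto; intros; [apply Hf|apply Hg|apply Hf|apply Hg]; auto.
Qed.

Lemma Cint_by_parts f h dh rest a b : a <= b ->
  (forall x, a <= x <= b -> is_Cderive h x (dh x)) ->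
  (forall x, a <= x <= b -> Ccontinuous dh x) -> (forall x, a <= x <= b -> Ccontinuous rest x) ->
  (forall x, a <= x <= b -> f x = Csub (dh x) (rest x)) ->
  Cint f a b = Csub (Csub (h b) (h a)) (CRInt rest a b).
Proof.
  intros Hab Dh Cdh Crest Ef.
  rewrite <- (CRInt_derive h dh), <- CRInt_Csub by auto.
  apply Cint_CRInt; auto. intros; apply Ccontinuous_Csub; auto.
Qed.

Lemma RInt_le_const (f : R -> R) a b c : a <= b -> (forall t, a <= t <= b -> continuity_pt f t) ->
  (forall t, a <= t <= b -> f t <= c) -> RInt f a b <= (b - a) * c.
Proof.
  intros Hab Hc H. replace ((b - a) * c) with (RInt (fun _ => c) a b) by (rewrite RInt_const; reflexivity).
  apply RInt_le; auto using ex_RInt_continuity_pt, ex_RInt_const. intros; apply H; lra.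
Qed.

Lemma RInt_ge0 (f : R -> R) a b : a <= b -> (forall t, a <= t <= b -> continuity_pt f t) ->
  (forall t, a <= t <= b -> 0 <= f t) -> 0 <= RInt f a b.
Proof.
  intros Hab Hc H. replace 0 with (RInt (fun _ => 0) a b) at 1
    by (rewrite RInt_const; unfold scal; simpl; unfold mult; simpl; ring).
  apply RInt_le; auto using ex_RInt_continuity_pt, ex_RInt_const. intros; apply H; lra.
Qed.

Lemma dot_le_norm_mul a b c d : a * c + b * d <= sqrt (a ^ 2 + b ^ 2) * sqrt (c ^ 2 + d ^ 2).
Proof.
  rewrite <- sqrt_mult_alt by nra.
  destruct (Rle_or_lt (a * c + b * d) 0) as [H|H].
  - pose proof (sqrt_pos ((a ^ 2 + b ^ 2) * (c ^ 2 + d ^ 2))). lra.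
  - rewrite <- (sqrt_pow2 (a * c + b * d)) by lra. apply sqrt_le_1_alt.
    pose proof (pow2_ge_0 (a * d - b * c)). nra.
Qed.

(* Pairing the integral [I] with [I / |I|] reduces to the real triangle inequality. *)
Lemma Cmod_CRInt_le f a b : a <= b -> (forall x, a <= x <= b -> Ccontinuous f x) ->
  Cmod (CRInt f a b) <= RInt (fun t => Cmod (f t)) a b.
Proof.
  intros Hab Hf.
  assert (E1 : ex_RInt (fun t => fst (f t)) a b)
    by (apply ex_RInt_continuity_pt; auto; intros; apply Hf; auto).
  assert (E2 : ex_RInt (fun t => snd (f t)) a b)
    by (apply ex_RInt_continuity_pt; auto; intros; apply Hf; auto).
  set (A := RInt (fun t => fst (f t)) a b). set (B := RInt (fun t => snd (f t)) a b).
  set (m := Cmod (CRInt f a b)).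
  assert (Hm : m = sqrt (A ^ 2 + B ^ 2)) by reflexivity.
  assert (I0 : 0 <= RInt (fun t => Cmod (f t)) a b).
  { apply RInt_ge0; auto using Cmod_ge0. intros; apply continuity_pt_Cmod, Hf; auto. }
  destruct (Rle_or_lt m 0) as [H0|H0]; [lra|].
  assert (Hmm : m * m = RInt (fun t => A * fst (f t) + B * snd (f t)) a b).
  { assert (HH : is_RInt (fun t => A * fst (f t) + B * snd (f t)) a b (A * A + B * B))
      by exact (is_RInt_plus (V := R_NormedModule) _ _ a b _ _
                  (is_RInt_scal _ a b A _ (RInt_correct _ a b E1))
                  (is_RInt_scal _ a b B _ (RInt_correct _ a b E2))).
    rewrite (is_RInt_unique _ _ _ _ HH), Hm, sqrt_sqrt by nra. ring. }
  assert (Key : m * m <= m * RInt (fun t => Cmod (f t)) a b).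
  { rewrite Hmm, <- (RInt_scal (V := R_CompleteNormedModule))
      by (apply ex_RInt_continuity_pt; auto; intros; apply continuity_pt_Cmod, Hf; auto).
    apply RInt_le; auto.
    - apply ex_RInt_continuity_pt; auto. intros x Hx; destruct (Hf x Hx).
      apply continuity_pt_plus; apply continuity_pt_mult; auto; now apply continuity_pt_const.
    - apply ex_RInt_continuity_pt; auto. intros x Hx.
      apply continuity_pt_mult; [now apply continuity_pt_const|apply continuity_pt_Cmod, Hf; auto].
    - intros x Hx. unfold scal; simpl; unfold mult; simpl. rewrite Hm.
      unfold Cmod, Re, Im. apply dot_le_norm_mul. }
  apply Rmult_le_reg_l with m; lra.
Qed.

Lemma Cmod_CRInt_le_const f a b B : a <= b -> (forall x, a <= x <= b -> Ccontinuous f x) ->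
  (forall x, a <= x <= b -> Cmod (f x) <= B) -> Cmod (CRInt f a b) <= (b - a) * B.
Proof.
  intros Hab Hf HB. eapply Rle_trans; [now apply Cmod_CRInt_le|].
  apply RInt_le_const; auto. intros; apply continuity_pt_Cmod, Hf; auto.
Qed.

(** * Gronwall's inequality *)

Definition clamp (b x : R) : R := Rmax 0 (Rmin b x).

Lemma clamp_lipschitz b x y : Rabs (clamp b x - clamp b y) <= Rabs (x - y).
Proof. unfold clamp, Rmax, Rmin. repeat destruct Rle_dec; split_Rabs; lra. Qed.

Lemma clamp_in b x : 0 <= b -> 0 <= clamp b x <= b.
Proof. intros. unfold clamp, Rmax, Rmin. repeat destruct Rle_dec; lra. Qed.

Lemma clamp_id b x : 0 <= x <= b -> clamp b x = x.
Proof. intros. unfold clamp, Rmax, Rmin. repeat destruct Rle_dec; lra. Qed.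

Lemma continuity_pt_clamp b x : continuity_pt (clamp b) x.
Proof.
  apply continuity_pt_locally. intros eps. exists eps. intros u Hu.
  eapply Rle_lt_trans; [apply clamp_lipschitz|exact Hu].
Qed.

Lemma continuity_pt_comp_clamp (f : R -> R) b x : 0 <= b ->
  (forall t, 0 <= t <= b -> continuity_pt f t) -> continuity_pt (fun t => f (clamp b t)) x.
Proof.
  intros Hb H. apply (continuity_pt_comp (clamp b) f x).
  - apply continuity_pt_clamp.
  - now apply H, clamp_in.
Qed.

Lemma is_derive_RInt_continuous (f : R -> R) x : (forall t, continuity_pt f t) ->
  is_derive (fun t => RInt f 0 t) x (f x).
Proof.
  intros H. apply (is_derive_RInt (V := R_NormedModule) f (fun t => RInt f 0 t) 0 x).
  - apply filter_forall. intros t.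
    apply (RInt_correct (V := R_CompleteNormedModule)), (ex_RInt_continuous (V := R_CompleteNormedModule)).
    intros; now apply continuity_pt_filterlim.
  - now apply continuity_pt_filterlim.
Qed.

Lemma exp_neg_mul_cancel c x : exp (- c * x) * exp (c * x) = 1.
Proof. rewrite <- exp_plus. replace (- c * x + c * x) with 0 by ring. apply exp_0. Qed.

Lemma exp_le_exp u v : u <= v -> exp u <= exp v.
Proof. intros [H|<-]; [left; now apply exp_increasing|lra]. Qed.

Lemma continuity_pt_exp_mul k t : continuity_pt (fun x => exp (k * x)) t.
Proof.
  apply derivable_continuous_pt, (derivable_pt_comp (fun x => k * x) exp).
  - apply derivable_pt_mult; [apply derivable_pt_const|apply derivable_pt_id].
  - apply derivable_pt_exp.
Qed.

(* [(A + L U) e^{-L x}] is nonincreasing, where [U] is the primitive of [v]. *)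
Lemma gronwall (v : R -> R) b A L : 0 <= b -> 0 <= A -> 0 <= L ->
  (forall x, 0 <= x <= b -> continuity_pt v x) ->
  (forall x, 0 <= x <= b -> v x <= A + L * RInt v 0 x) ->
  forall x, 0 <= x <= b -> v x <= A * exp (L * x).
Proof.
  intros Hb HA HL Hc Hv x Hx.
  set (vc := fun t => v (clamp b t)).
  set (U := fun t => RInt vc 0 t).
  assert (EU : forall t, 0 <= t <= b -> RInt v 0 t = U t).
  { intros t Ht. apply RInt_ext. rewrite Rmin_left, Rmax_right by lra. intros y Hy.
    unfold vc. rewrite clamp_id; lra. }
  set (H := fun t => (A + L * U t) * exp (- L * t)).
  set (dH := fun t => (L * vc t) * exp (- L * t) + (A + L * U t) * (- L * exp (- L * t))).
  assert (dHd : forall t, is_derive H t (dH t)).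
  { intros t. unfold H, dH. eapply is_derive_eq_l.
    - apply is_derive_Rmult.
      + apply is_derive_Rplus; [apply is_derive_Rconst|].
        apply is_derive_Rmult; [apply is_derive_Rconst|].
        apply is_derive_RInt_continuous. intros; now apply continuity_pt_comp_clamp.
      + auto_derive; auto.
    - cbv beta. ring. }
  assert (HdH : forall c, 0 <= c <= x -> dH c <= 0).
  { intros c Hc'. unfold dH. pose proof (Hv c ltac:(lra)) as Hvc. rewrite EU in Hvc by lra.
    unfold vc. rewrite clamp_id by lra. pose proof (exp_pos (- L * c)).
    assert (L * v c <= L * (A + L * U c)) by (apply Rmult_le_compat_l; auto). nra. }
  assert (H0 : H 0 = A).
  { unfold H, U. rewrite RInt_point. unfold zero; simpl.
    replace (- L * 0) with 0 by ring. rewrite exp_0. ring. }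
  assert (Hxle : H x <= A).
  { destruct (Req_dec x 0) as [->|Hx0]; [lra|].
    destruct (MVT_gen H 0 x dH) as [c [Hc1 Hc2]].
    - intros; apply dHd.
    - intros; eapply is_derive_continuity_pt; apply dHd.
    - rewrite Rmin_left, Rmax_right in Hc1 by lra. pose proof (HdH c ltac:(lra)).
      assert (dH c * (x - 0) <= 0) by (apply Rmult_le_0_r; lra). lra. }
  pose proof (Hv x Hx) as Hvx. rewrite EU in Hvx by lra.
  pose proof (exp_pos (L * x)). unfold H in Hxle.
  replace (A + L * U x) with ((A + L * U x) * exp (- L * x) * exp (L * x))
    in Hvx by (rewrite Rmult_assoc, exp_neg_mul_cancel; ring).
  apply Rmult_le_compat_r with (r := exp (L * x)) in Hxle; lra.
Qed.

(** * The driven oscillator [y'' + s^2 y = g] *)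

Definition Ci : Cx := (0, 1).

Lemma Cmod_Ci_mul s : Cmod (Cmul Ci s) = Cmod s.
Proof.
  rewrite Cmod_Cmul. replace (Cmod Ci) with 1; [ring|].
  unfold Cmod, Ci, Re, Im; simpl. rewrite <- sqrt_1 at 1. f_equal. ring.
Qed.

Lemma RInt_scal_mono (f h : R -> R) a b c : a <= b ->
  (forall t, a <= t <= b -> continuity_pt f t) -> (forall t, a <= t <= b -> continuity_pt h t) ->
  (forall t, a <= t <= b -> c * f t <= h t) -> c * RInt f a b <= RInt h a b.
Proof.
  intros Hab Hf Hh H.
  rewrite <- (RInt_scal (V := R_CompleteNormedModule)) by now apply ex_RInt_continuity_pt.
  apply RInt_le; auto using ex_RInt_continuity_pt.
  - apply ex_RInt_continuity_pt; auto. intros; apply continuity_pt_mult; auto.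
    now apply continuity_pt_const.
  - intros; apply H; lra.
Qed.

Definition oscillator_const (M : R) :=
  M * PI * exp ((1 + M) * PI) + M * PI * (M * PI * exp ((1 + M) * PI) + 1).

Lemma oscillator_const_nonneg M : 0 <= M -> 0 <= oscillator_const M.
Proof.
  intros HM. unfold oscillator_const. pose proof PI_RGT_0. pose proof (exp_pos ((1 + M) * PI)).
  assert (0 <= M * PI * exp ((1 + M) * PI)) by (apply Rmult_le_pos; [apply Rmult_le_pos|]; lra).
  assert (0 <= M * PI * (M * PI * exp ((1 + M) * PI) + 1)) by (apply Rmult_le_pos; [apply Rmult_le_pos|]; lra).
  lra.
Qed.

(* [Cexp_mi r t] is [exp (- i r t)]. *)
Definition Cexp_mi (r : Cx) (t : R) : Cx :=
  (exp (Im r * t) * cos (Re r * t), - (exp (Im r * t) * sin (Re r * t))).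

Lemma is_Cderive_Cexp_mi r t : is_Cderive (Cexp_mi r) t (Cmul (Im r, - Re r) (Cexp_mi r t)).
Proof. split; unfold Cexp_mi; simpl; auto_derive; auto; unfold Re, Im; simpl; ring. Qed.

Lemma Cmod_Cexp_mi r t : Cmod (Cexp_mi r t) = exp (Im r * t).
Proof.
  unfold Cmod, Cexp_mi, Re, Im; simpl. pose proof (exp_pos (snd r * t)).
  pose proof (sin2_cos2 (fst r * t)) as SC. unfold Rsqr in SC.
  match goal with |- sqrt ?X = _ => replace X with (exp (snd r * t) ^ 2) end;
    [apply sqrt_pow2; lra|].
  transitivity (exp (snd r * t) ^ 2 * (sin (fst r * t) * sin (fst r * t) + cos (fst r * t) * cos (fst r * t)));
    [rewrite SC|]; ring.
Qed.

Section DrivenOscillator.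

Variables (s : Cx) (y dy g : R -> Cx).
Hypotheses (y0 : y 0 = (0, 0)) (dy0 : dy 0 = (0, 0))
  (Hy : forall x, 0 <= x <= PI -> is_Cderive y x (dy x))
  (Hdy : forall x, 0 <= x <= PI -> is_Cderive dy x (Csub (g x) (Cmul (Cmul s s) (y x))))
  (Hg : forall x, 0 <= x <= PI -> Ccontinuous g x).

(* Variation of constants: [(e^{-i r t} (y' + i r y))' = e^{-i r t} g] whenever [r^2 = s^2]. *)
Lemma CRInt_Cexp_mi_source r : Cmul r r = Cmul s s -> forall x, 0 <= x <= PI ->
  CRInt (fun t => Cmul (Cexp_mi r t) (g t)) 0 x
  = Cmul (Cexp_mi r x) (Cadd (dy x) (Cmul (Cmul Ci r) (y x))).
Proof.
  intros Hr x Hx.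
  set (P := fun t => Cmul (Cexp_mi r t) (Cadd (dy t) (Cmul (Cmul Ci r) (y t)))).
  assert (dP : forall t, 0 <= t <= PI -> is_Cderive P t (Cmul (Cexp_mi r t) (g t))).
  { intros t Ht. unfold P. eapply is_Cderive_eq_l.
    - apply is_Cderive_Cmul; [apply is_Cderive_Cexp_mi|].
      apply is_Cderive_Cadd; [now apply Hdy|].
      apply is_Cderive_Cmul; [apply is_Cderive_const|now apply Hy].
    - rewrite <- Hr. generalize (Cexp_mi r t) (y t) (dy t) (g t) r.
      intros [e1 e2] [y1 y2] [d1 d2] [g1 g2] [r1 r2].
      unfold Cadd, Csub, Cmul, Ci, Re, Im; simpl. f_equal; ring. }
  rewrite (CRInt_derive P); try lra.
  - fold (P x). unfold P at 2. rewrite y0, dy0. destruct (P x).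
    unfold Csub, Cmul, Cadd, Re, Im; simpl. f_equal; ring.
  - intros; apply dP; lra.
  - intros; apply Ccontinuous_Cmul; [eapply is_Cderive_Ccontinuous, is_Cderive_Cexp_mi|apply Hg; lra].
Qed.

Lemma weighted_first_integral_le r : Cmul r r = Cmul s s -> forall x, 0 <= x <= PI ->
  exp (- Rabs (Im r) * x) * Cmod (Cadd (dy x) (Cmul (Cmul Ci r) (y x)))
  <= RInt (fun t => exp (- Rabs (Im r) * t) * Cmod (g t)) 0 x.
Proof.
  intros Hr x Hx. set (p := Cadd (dy x) (Cmul (Cmul Ci r) (y x))).
  assert (Hn : exp (Im r * x) * Cmod p <= RInt (fun t => exp (Im r * t) * Cmod (g t)) 0 x).
  { rewrite <- Cmod_Cexp_mi, <- Cmod_Cmul, <- CRInt_Cexp_mi_source by auto.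
    eapply Rle_trans; [apply Cmod_CRInt_le; [lra|]|].
    - intros; apply Ccontinuous_Cmul; [eapply is_Cderive_Ccontinuous, is_Cderive_Cexp_mi|apply Hg; lra].
    - right. apply RInt_ext. intros t _. now rewrite Cmod_Cmul, Cmod_Cexp_mi. }
  replace (exp (- Rabs (Im r) * x) * Cmod p)
    with (exp (- Rabs (Im r) * x - Im r * x) * (exp (Im r * x) * Cmod p))
    by (rewrite <- Rmult_assoc, <- exp_plus; f_equal; f_equal; ring).
  eapply Rle_trans; [apply Rmult_le_compat_l; [left; apply exp_pos|exact Hn]|].
  apply RInt_scal_mono; [lra| | |];
    try (intros; apply continuity_pt_mult; [apply continuity_pt_exp_mul|apply continuity_pt_Cmod, Hg; lra]).
  intros t Ht. rewrite <- Rmult_assoc, <- exp_plus.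
  apply Rmult_le_compat_r; [apply Cmod_ge0|]. apply exp_le_exp.
  assert (Im r * (t - x) <= Rabs (Im r) * (x - t)).
  { assert (- Im r <= Rabs (Im r)) by (split_Rabs; lra). nra. }
  lra.
Qed.

Let a := Rabs (Im s).
Let G x := RInt (fun t => exp (- a * t) * Cmod (g t)) 0 x.

Lemma weighted_dy_and_sy_le x : 0 <= x <= PI ->
  exp (- a * x) * Cmod (dy x) <= G x /\ exp (- a * x) * (Cmod s * Cmod (y x)) <= G x.
Proof.
  intros Hx.
  set (p := Cadd (dy x) (Cmul (Cmul Ci s) (y x))).
  set (q := Cadd (dy x) (Cmul (Cmul Ci (Cscal (-1) s)) (y x))).
  assert (Hp : exp (- a * x) * Cmod p <= G x) by now apply weighted_first_integral_le.
  assert (Hq : exp (- a * x) * Cmod q <= G x).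
  { unfold G, q. replace a with (Rabs (Im (Cscal (-1) s))) by (unfold a, Cscal, Im; simpl;
      replace (-1 * snd s) with (- snd s) by ring; apply Rabs_Ropp).
    apply weighted_first_integral_le; auto.
    unfold Cmul, Cscal, Re, Im; simpl. f_equal; ring. }
  assert (Ep : Cadd p q = Cscal 2 (dy x)).
  { unfold p, q. generalize (dy x) (y x) s; intros [d1 d2] [y1 y2] [s1 s2].
    unfold Cadd, Cmul, Cscal, Ci, Re, Im; simpl; f_equal; ring. }
  assert (Eq : Csub p q = Cscal 2 (Cmul (Cmul Ci s) (y x))).
  { unfold p, q. generalize (dy x) (y x) s; intros [d1 d2] [y1 y2] [s1 s2].
    unfold Csub, Cadd, Cmul, Cscal, Ci, Re, Im; simpl; f_equal; ring. }
  pose proof (Cmod_Cadd_le p q) as Tp. pose proof (Cmod_Csub_le p q) as Tq.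
  rewrite Ep, Cmod_Cscal, Rabs_right in Tp by lra.
  rewrite Eq, Cmod_Cscal, Rabs_right, Cmod_Cmul, Cmod_Ci_mul in Tq by lra.
  pose proof (exp_pos (- a * x)). split; nra.
Qed.

Let u t := exp (- a * t) * Cmod (y t).
Let w t := exp (- a * t) * Cmod (dy t).

Lemma weighted_y_continuous t : 0 <= t <= PI -> continuity_pt u t.
Proof.
  intros; apply continuity_pt_mult; [apply continuity_pt_exp_mul|].
  apply continuity_pt_Cmod; eapply is_Cderive_Ccontinuous; now apply Hy.
Qed.

Lemma weighted_dy_continuous t : 0 <= t <= PI -> continuity_pt w t.
Proof.
  intros; apply continuity_pt_mult; [apply continuity_pt_exp_mul|].
  apply continuity_pt_Cmod; eapply is_Cderive_Ccontinuous; now apply Hdy.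
Qed.

Lemma weighted_y_le_int x : 0 <= x <= PI -> u x <= RInt w 0 x.
Proof.
  intros Hx. unfold u.
  assert (FT : CRInt dy 0 x = y x).
  { rewrite (CRInt_derive y dy 0 x), y0; try lra.
    - unfold Csub, Re, Im. destruct (y x); simpl; f_equal; ring.
    - intros; apply Hy; lra.
    - intros; eapply is_Cderive_Ccontinuous; apply Hdy; lra. }
  rewrite <- FT.
  eapply Rle_trans; [apply Rmult_le_compat_l; [left; apply exp_pos|]|].
  { apply Cmod_CRInt_le; [lra|]. intros; eapply is_Cderive_Ccontinuous; apply Hdy; lra. }
  apply RInt_scal_mono; [lra| | |].
  - intros; apply continuity_pt_Cmod; eapply is_Cderive_Ccontinuous; apply Hdy; lra.
  - intros; apply weighted_dy_continuous; lra.
  - intros t Ht. unfold w. apply Rmult_le_compat_r; [apply Cmod_ge0|].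
    apply exp_le_exp. assert (0 <= a) by apply Rabs_pos. nra.
Qed.

Variable M : R.
Hypotheses (HM : 0 <= M)
  (Hgb : forall x, 0 <= x <= PI -> Cmod (g x) <= M * (Cmod (y x) + exp (a * x))).

Lemma G_le x : 0 <= x <= PI -> G x <= M * RInt u 0 x + M * x.
Proof.
  intros Hx. unfold G.
  assert (EI : RInt (fun t => M * u t + M) 0 x = M * RInt u 0 x + M * x).
  { assert (Iu : ex_RInt u 0 x)
      by (apply ex_RInt_continuity_pt; try lra; intros; apply weighted_y_continuous; lra).
    rewrite (RInt_plus (V := R_CompleteNormedModule)), (RInt_scal (V := R_CompleteNormedModule)),
      RInt_const; auto using ex_RInt_const.
    - unfold scal, plus; simpl; unfold mult; simpl. ring.
    - now apply (ex_RInt_scal (V := R_NormedModule)). }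
  rewrite <- EI. apply RInt_le; try lra.
  - apply ex_RInt_continuity_pt; try lra. intros; apply continuity_pt_mult;
      [apply continuity_pt_exp_mul|apply continuity_pt_Cmod, Hg; lra].
  - apply ex_RInt_continuity_pt; try lra. intros; apply continuity_pt_plus;
      [apply continuity_pt_mult|]; try now apply continuity_pt_const.
    apply weighted_y_continuous; lra.
  - intros t Ht. unfold u. pose proof (Hgb t ltac:(lra)). pose proof (exp_pos (- a * t)).
    pose proof (exp_neg_mul_cancel a t).
    apply Rle_trans with (exp (- a * t) * (M * (Cmod (y t) + exp (a * t)))); nra.
Qed.

(* Gronwall applied to [u + w], using [u <= int w] and [w <= G <= M int u + M x]. *)
Lemma weighted_y_dy_le x : 0 <= x <= PI -> u x + w x <= M * PI * exp ((1 + M) * PI).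
Proof.
  intros Hx. pose proof PI_RGT_0.
  set (v := fun t => u t + w t).
  assert (Cv : forall t, 0 <= t <= PI -> continuity_pt v t)
    by (intros; apply continuity_pt_plus; auto using weighted_y_continuous, weighted_dy_continuous).
  assert (Bv : forall t, 0 <= t <= PI -> v t <= M * PI + (1 + M) * RInt v 0 t).
  { clear x Hx. intros x Hx. unfold v at 1.
    assert (u0 : 0 <= RInt u 0 x).
    { apply RInt_ge0; try lra; intros; [apply weighted_y_continuous; lra|].
      unfold u. pose proof (exp_pos (- a * t)). pose proof (Cmod_ge0 (y t)). nra. }
    assert (w0 : 0 <= RInt w 0 x).
    { apply RInt_ge0; try lra; intros; [apply weighted_dy_continuous; lra|].
      unfold w. pose proof (exp_pos (- a * t)). pose proof (Cmod_ge0 (dy t)). nra. }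
    rewrite (RInt_plus (V := R_CompleteNormedModule) u w) by
      (apply ex_RInt_continuity_pt; try lra; intros;
       first [apply weighted_y_continuous|apply weighted_dy_continuous]; lra).
    unfold plus; simpl.
    pose proof (weighted_y_le_int x Hx). destruct (weighted_dy_and_sy_le x Hx) as [Hw _].
    pose proof (G_le x Hx). fold (w x) in Hw.
    assert (M * x <= M * PI) by nra. assert (0 <= M * RInt w 0 x) by nra. nra. }
  eapply Rle_trans; [apply (gronwall v PI (M * PI) (1 + M)); auto; nra|].
  apply Rmult_le_compat_l; [nra|]. apply exp_le_exp. nra.
Qed.

Lemma driven_oscillator_bounds x : 0 <= x <= PI ->
  Cmod (y x) <= oscillator_const M * exp (a * x) /\
  Cmod s * Cmod (y x) <= oscillator_const M * exp (a * x) /\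
  Cmod (dy x) <= oscillator_const M * exp (a * x).
Proof.
  intros Hx. pose proof PI_RGT_0.
  set (K0 := M * PI * exp ((1 + M) * PI)).
  assert (K00 : 0 <= K0)
    by (unfold K0; pose proof (exp_pos ((1 + M) * PI)); apply Rmult_le_pos; [apply Rmult_le_pos|]; lra).
  assert (K1 : 0 <= M * PI * (K0 + 1)) by (apply Rmult_le_pos; [apply Rmult_le_pos|]; lra).
  assert (KK : oscillator_const M = K0 + M * PI * (K0 + 1)) by reflexivity.
  assert (Huw : forall t, 0 <= t <= PI -> u t <= K0 /\ w t <= K0).
  { intros t Ht. pose proof (weighted_y_dy_le t Ht) as Ht'. fold K0 in Ht'.
    assert (0 <= u t) by (unfold u; pose proof (exp_pos (- a * t)); pose proof (Cmod_ge0 (y t)); nra).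
    assert (0 <= w t) by (unfold w; pose proof (exp_pos (- a * t)); pose proof (Cmod_ge0 (dy t)); nra).
    lra. }
  assert (Iu : RInt u 0 x <= (x - 0) * K0).
  { apply RInt_le_const; try lra; intros; [apply weighted_y_continuous|apply Huw]; lra. }
  assert (HS : exp (- a * x) * (Cmod s * Cmod (y x)) <= M * PI * (K0 + 1)).
  { destruct (weighted_dy_and_sy_le x Hx) as [_ Hs]. pose proof (G_le x Hx).
    assert (M * RInt u 0 x <= M * (PI * K0)) by (apply Rmult_le_compat_l; nra).
    assert (M * x <= M * PI) by nra. nra. }
  pose proof (exp_pos (a * x)). pose proof (exp_neg_mul_cancel a x).
  assert (Unw : forall X Y, exp (- a * x) * X <= Y -> X <= Y * exp (a * x)).
  { intros X Y HX. replace X with (exp (- a * x) * X * exp (a * x))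
      by (rewrite Rmult_comm, <- Rmult_assoc, (Rmult_comm (exp (a * x))), H1; ring).
    now apply Rmult_le_compat_r; [lra|]. }
  destruct (Huw x Hx) as [Hu Hw]. unfold u, w in Hu, Hw. rewrite KK.
  repeat split; apply Unw; nra.
Qed.

End DrivenOscillator.

(** * Complex square root, cosine and sine *)

Lemma Csqrt_sq z : Cmul (Csqrt z) (Csqrt z) = z.
Proof.
  destruct z as [a b]. unfold Csqrt, Cmod, Cmul, Re, Im; cbn [fst snd].
  set (m := sqrt (a ^ 2 + b ^ 2)).
  assert (Hm : m * m = a ^ 2 + b ^ 2) by (unfold m; rewrite sqrt_sqrt; nra).
  assert (Hma : Rabs a <= m).
  { rewrite <- sqrt_Rsqr_abs. unfold m. apply sqrt_le_1_alt. unfold Rsqr; nra. }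
  set (p := sqrt ((m + a) / 2)). set (q := sqrt ((m - a) / 2)).
  set (e := if Rle_dec 0 b then 1 else -1).
  assert (Hp : p * p = (m + a) / 2) by (apply sqrt_sqrt; split_Rabs; lra).
  assert (Hq : q * q = (m - a) / 2) by (apply sqrt_sqrt; split_Rabs; lra).
  assert (Hpq : p * q = Rabs b / 2).
  { unfold p, q. rewrite <- sqrt_mult_alt by (split_Rabs; lra).
    rewrite <- (sqrt_pow2 (Rabs b / 2)) by (pose proof (Rabs_pos b); lra). f_equal.
    replace ((Rabs b / 2) ^ 2) with (Rabs b ^ 2 / 4) by field.
    rewrite pow2_abs. transitivity ((m * m - a * a) / 4); [field|rewrite Hm; field]. }
  assert (He : e * e = 1 /\ e * Rabs b = b).
  { unfold e; destruct Rle_dec; split; try ring.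
    - rewrite Rabs_right; lra.
    - rewrite Rabs_left; lra. }
  f_equal.
  - transitivity (p * p - e * e * (q * q)); [ring|]. rewrite Hp, Hq, (proj1 He). field.
  - transitivity (2 * e * (p * q)); [ring|]. rewrite Hpq.
    transitivity (e * Rabs b); [field|apply He].
Qed.

Lemma Cmod_Csqrt z : Cmod (Csqrt z) = sqrt (Cmod z).
Proof.
  rewrite <- (Csqrt_sq z) at 2. rewrite Cmod_Cmul, sqrt_square; auto using Cmod_ge0.
Qed.

Definition Csin (w : Cx) : Cx := (sin (Re w) * cosh (Im w), cos (Re w) * sinh (Im w)).

Lemma is_derive_cosh_lin k x : is_derive (fun t => cosh (t * k)) x (k * sinh (x * k)).
Proof.
  apply is_derive_Reals. replace (k * sinh (x * k)) with (sinh (x * k) * k) by ring.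
  apply (derivable_pt_lim_comp (fun t => t * k) cosh); [|apply derivable_pt_lim_cosh].
  apply is_derive_Reals. auto_derive; auto. ring.
Qed.

Lemma is_derive_sinh_lin k x : is_derive (fun t => sinh (t * k)) x (k * cosh (x * k)).
Proof.
  apply is_derive_Reals. replace (k * cosh (x * k)) with (cosh (x * k) * k) by ring.
  apply (derivable_pt_lim_comp (fun t => t * k) sinh); [|apply derivable_pt_lim_sinh].
  apply is_derive_Reals. auto_derive; auto. ring.
Qed.

Lemma is_Cderive_Ccos_lin s x :
  is_Cderive (fun t => Ccos (Cscal t s)) x (Cmul (Cscal (-1) s) (Csin (Cscal x s))).
Proof.
  destruct s as [sg ta]. split; unfold Ccos, Csin, Cscal, Cmul, Re, Im; cbn [fst snd].
  - eapply is_derive_eq_l; [apply is_derive_Rmult; [auto_derive; auto|apply is_derive_cosh_lin]|].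
    cbv beta. ring.
  - eapply is_derive_eq_l.
    + apply (is_derive_opp (fun t => sin (t * sg) * sinh (t * ta))).
      apply is_derive_Rmult; [auto_derive; auto|apply is_derive_sinh_lin].
    + unfold opp; simpl. ring.
Qed.

Lemma is_Cderive_Csin_lin s x :
  is_Cderive (fun t => Csin (Cscal t s)) x (Cmul s (Ccos (Cscal x s))).
Proof.
  destruct s as [sg ta]. split; unfold Ccos, Csin, Cscal, Cmul, Re, Im; cbn [fst snd].
  - eapply is_derive_eq_l; [apply is_derive_Rmult; [auto_derive; auto|apply is_derive_cosh_lin]|].
    cbv beta. ring.
  - eapply is_derive_eq_l; [apply is_derive_Rmult; [auto_derive; auto|apply is_derive_sinh_lin]|].
    cbv beta. ring.
Qed.

Lemma cosh_sq_sub_sinh_sq u : cosh u ^ 2 - sinh u ^ 2 = 1.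
Proof.
  unfold cosh, sinh. replace (((exp u + exp (- u)) / 2) ^ 2 - ((exp u - exp (- u)) / 2) ^ 2)
    with (exp (- u) * exp u) by field.
  rewrite <- exp_plus. replace (- u + u) with 0 by ring. apply exp_0.
Qed.

Lemma cosh_le_exp_abs u : cosh u <= exp (Rabs u).
Proof.
  unfold cosh. assert (exp u <= exp (Rabs u)) by (apply exp_le_exp, Rle_abs).
  assert (exp (- u) <= exp (Rabs u)) by (apply exp_le_exp; rewrite <- Rabs_Ropp; apply Rle_abs).
  lra.
Qed.

(* [|cos w|^2 = cosh^2 - sin^2] and [|sin w|^2 = cosh^2 - cos^2], with [w = p + i q]. *)
Lemma Cmod_Ccos_Csin_le w : Cmod (Ccos w) <= exp (Rabs (Im w)) /\ Cmod (Csin w) <= exp (Rabs (Im w)).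
Proof.
  unfold Ccos, Csin, Re, Im. destruct w as [p q]; cbn [fst snd].
  pose proof (cosh_le_exp_abs q). pose proof (cosh_sq_sub_sinh_sq q) as Hsh.
  pose proof (sin2_cos2 p) as Hsc. unfold Rsqr in Hsc.
  assert (0 < cosh q) by (unfold cosh; pose proof (exp_pos q); pose proof (exp_pos (- q)); lra).
  pose proof (exp_pos (Rabs q)).
  assert (Hce : cosh q ^ 2 <= exp (Rabs q) ^ 2) by (apply pow_incr; lra).
  pose proof (pow2_ge_0 (sin p)). pose proof (pow2_ge_0 (cos p)).
  split; apply Cmod_le_sqr; try lra; unfold Re, Im; cbn [fst snd].
  - replace ((cos p * cosh q) ^ 2 + (- (sin p * sinh q)) ^ 2)
      with (cosh q ^ 2 - sin p ^ 2 - sin p ^ 2 * (cosh q ^ 2 - sinh q ^ 2 - 1)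
            - cosh q ^ 2 * (1 - sin p * sin p - cos p * cos p)) by ring.
    rewrite Hsh, <- Hsc. lra.
  - replace ((sin p * cosh q) ^ 2 + (cos p * sinh q) ^ 2)
      with (cosh q ^ 2 - cos p ^ 2 - cos p ^ 2 * (cosh q ^ 2 - sinh q ^ 2 - 1)
            - cosh q ^ 2 * (1 - sin p * sin p - cos p * cos p)) by ring.
    rewrite Hsh, <- Hsc. lra.
Qed.

Lemma Im_Cscal_abs x s : 0 <= x -> Rabs (Im (Cscal x s)) = Rabs (Im s) * x.
Proof. intros Hx. unfold Cscal, Im; simpl. rewrite Rabs_mult, Rabs_right by lra. ring. Qed.

(** * The potential and [rho] *)

Definition V_ext (V : R -> R) (x : R) : R := V (clamp PI x).

Lemma abs_continuous_on_uniform V : abs_continuous_on V 0 PI -> forall eps, 0 < eps ->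
  exists d, 0 < d /\ forall x y, 0 <= x <= PI -> 0 <= y <= PI -> Rabs (x - y) < d ->
  Rabs (V x - V y) < eps.
Proof.
  intros hV eps He. destruct (hV eps He) as [d [Hd H]]. exists d; split; auto.
  intros x y Hx Hy Hxy. destruct (Rle_dec x y) as [Hle|Hle].
  - specialize (H (cons (x, y) nil)). simpl in H. rewrite Rabs_minus_sym.
    enough (Rabs (V y - V x) + 0 < eps) by lra. apply H; [lra|split_Rabs; lra].
  - specialize (H (cons (y, x) nil)). simpl in H.
    enough (Rabs (V x - V y) + 0 < eps) by lra. apply H; [lra|split_Rabs; lra].
Qed.

Lemma V_ext_continuous V : abs_continuous_on V 0 PI -> forall t, continuity_pt (V_ext V) t.
Proof.
  intros hV t. pose proof PI_RGT_0 as HPI. apply continuity_pt_locally. intros eps.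
  destruct (abs_continuous_on_uniform V hV eps (cond_pos eps)) as [d [Hd Hu_cont]].
  exists (mkposreal d Hd). intros u Hu. apply Hu_cont; try (apply clamp_in; lra).
  eapply Rle_lt_trans; [apply clamp_lipschitz|exact Hu].
Qed.

Lemma V_ext_bounded V : abs_continuous_on V 0 PI ->
  exists M, 0 <= M /\ forall x, Rabs (V_ext V x) <= M.
Proof.
  intros hV. pose proof PI_RGT_0.
  destruct (continuity_ab_maj (fun x => Rabs (V_ext V x)) 0 PI) as [Mx [H1 _]]; [lra| |].
  - intros; apply continuity_pt_comp with (f2 := Rabs);
      [apply V_ext_continuous; auto|apply Rcontinuity_abs].
  - exists (Rabs (V_ext V Mx)). split; [apply Rabs_pos|]. intros x.
    specialize (H1 (clamp PI x) (clamp_in PI x ltac:(lra))).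
    unfold V_ext in *. now rewrite (clamp_id PI (clamp PI x)) in H1 by (apply clamp_in; lra).
Qed.

Definition rho_ext (V : R -> R) (x : R) : R :=
  / 2 * RInt (V_ext V) 0 x - x / (2 * PI) * RInt (V_ext V) 0 PI.

Definition rho_ext_deriv (V : R -> R) (x : R) : R :=
  / 2 * V_ext V x - / (2 * PI) * RInt (V_ext V) 0 PI.

Lemma Rint_V_ext V x : abs_continuous_on V 0 PI -> 0 <= x <= PI -> Rint V 0 x = RInt (V_ext V) 0 x.
Proof.
  intros hV Hx.
  assert (Ex : forall y, Rmin 0 x < y < Rmax 0 x -> V_ext V y = V y).
  { rewrite Rmin_left, Rmax_right by lra. intros y Hy. unfold V_ext. rewrite clamp_id; lra. }
  assert (E1 : ex_RInt (V_ext V) 0 x)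
    by (apply ex_RInt_continuity_pt; try lra; intros; now apply V_ext_continuous).
  rewrite Rint_RInt.
  - apply RInt_ext. intros; symmetry; now apply Ex.
  - eapply ex_RInt_ext; [exact Ex|exact E1].
Qed.

Lemma rho_rho_ext V x : abs_continuous_on V 0 PI -> 0 <= x <= PI -> rho V x = rho_ext V x.
Proof.
  intros hV Hx. pose proof PI_RGT_0. unfold rho, rho_ext. rewrite !Rint_V_ext; auto. lra.
Qed.

Lemma rho_ext_0 V : rho_ext V 0 = 0.
Proof. unfold rho_ext. rewrite RInt_point. unfold zero; simpl. field. apply PI_neq0. Qed.

Lemma is_derive_rho_ext V x : abs_continuous_on V 0 PI ->
  is_derive (rho_ext V) x (rho_ext_deriv V x).
Proof.
  intros hV. pose proof PI_RGT_0. unfold rho_ext, rho_ext_deriv. eapply is_derive_eq_l.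
  - apply is_derive_Rminus.
    + apply is_derive_Rmult; [apply is_derive_Rconst|].
      apply (is_derive_RInt_continuous (V_ext V)). intros; now apply V_ext_continuous.
    + apply is_derive_Rmult; [auto_derive; auto|apply is_derive_Rconst].
  - cbv beta. field. lra.
Qed.

Lemma continuity_pt_rho_ext_deriv V x : abs_continuous_on V 0 PI -> continuity_pt (rho_ext_deriv V) x.
Proof.
  intros hV. unfold rho_ext_deriv.
  apply continuity_pt_minus; apply continuity_pt_mult; try now apply continuity_pt_const.
  now apply V_ext_continuous.
Qed.

Section RhoBounds.

Variables (V : R -> R) (M : R).
Hypotheses (hV : abs_continuous_on V 0 PI) (HM : forall x, Rabs (V_ext V x) <= M).

Lemma abs_RInt_V_ext_le x : 0 <= x -> Rabs (RInt (V_ext V) 0 x) <= x * M.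
Proof.
  intros Hx. replace (x * M) with ((x - 0) * M) by ring. apply abs_RInt_le_const; auto.
  apply ex_RInt_continuity_pt; auto. intros; now apply V_ext_continuous.
Qed.

Lemma abs_rho_ext_le x : 0 <= x <= PI -> Rabs (rho_ext V x) <= PI * M.
Proof.
  intros Hx. pose proof PI_RGT_0. unfold rho_ext.
  pose proof (abs_RInt_V_ext_le x ltac:(lra)). pose proof (abs_RInt_V_ext_le PI ltac:(lra)).
  assert (0 <= M) by (pose proof (HM 0); pose proof (Rabs_pos (V_ext V 0)); lra).
  set (A := RInt (V_ext V) 0 x) in *. set (B := RInt (V_ext V) 0 PI) in *.
  eapply Rle_trans; [apply Rabs_triang|]. rewrite Rabs_Ropp, !Rabs_mult.
  unfold Rdiv. rewrite Rabs_mult, (Rabs_right (/ 2)), (Rabs_right x), (Rabs_right (/ (2 * PI)))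
    by (try apply Rle_ge, Rlt_le, Rinv_0_lt_compat; lra).
  assert (x * / (2 * PI) * Rabs B <= x * / (2 * PI) * (PI * M)).
  { apply Rmult_le_compat_l; auto. apply Rmult_le_pos; [lra|left; apply Rinv_0_lt_compat; lra]. }
  replace (x * / (2 * PI) * (PI * M)) with (x * M / 2) in H3 by (field; lra).
  assert (x * M <= PI * M) by nra. lra.
Qed.

Lemma abs_rho_ext_deriv_le x : Rabs (rho_ext_deriv V x) <= M.
Proof.
  pose proof PI_RGT_0. pose proof (abs_RInt_V_ext_le PI ltac:(lra)). pose proof (HM x).
  unfold rho_ext_deriv. set (B := RInt (V_ext V) 0 PI) in *.
  eapply Rle_trans; [apply Rabs_triang|]. rewrite Rabs_Ropp, !Rabs_mult.
  rewrite (Rabs_right (/ 2)), (Rabs_right (/ (2 * PI))) by (try apply Rle_ge, Rlt_le, Rinv_0_lt_compat; lra).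
  assert (/ (2 * PI) * Rabs B <= / (2 * PI) * (PI * M))
    by (apply Rmult_le_compat_l; auto; left; apply Rinv_0_lt_compat; lra).
  replace (/ (2 * PI) * (PI * M)) with (M / 2) in H2 by (field; lra). lra.
Qed.

End RhoBounds.

(** * [F] as a driven oscillator *)

Definition F_deriv (dxi : R -> Cx -> Cx) (z : Cx) (x : R) : Cx :=
  Csub (dxi x z) (Cmul (Cscal (-1) (Csqrt z)) (Csin (Cscal x (Csqrt z)))).

Section FAsDrivenOscillator.

Variables (V : R -> R) (xi dxi : R -> Cx -> Cx) (z : Cx).
Hypotheses (hV : abs_continuous_on V 0 PI) (hxi : is_xi V xi dxi).

Let s := Csqrt z.
Let g x := Cscal (V_ext V x) (xi x z).

Lemma is_Cderive_xi x : 0 <= x <= PI ->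
  is_Cderive (fun t => xi t z) x (dxi x z) /\
  is_Cderive (fun t => dxi t z) x (Cmul (Csub (RtoC (V x)) z) (xi x z)).
Proof.
  intros Hx. destruct (hxi z) as [_ [_ H]]. destruct (H x Hx) as [A [B [C D]]].
  split; split; now apply is_derive_Reals.
Qed.

Lemma F_initial : Ffun xi 0 z = (0, 0) /\ F_deriv dxi z 0 = (0, 0).
Proof.
  destruct (hxi z) as [X0 [DX0 _]]. unfold Ffun, F_deriv. rewrite X0, DX0.
  unfold Ccos, Csin, Cscal, Csub, Cmul, RtoC, Re, Im; cbn [fst snd].
  rewrite !Rmult_0_l, cos_0, sin_0, cosh_0. unfold sinh. rewrite Ropp_0, exp_0.
  split; f_equal; field.
Qed.

Lemma is_Cderive_F x : 0 <= x <= PI -> is_Cderive (fun t => Ffun xi t z) x (F_deriv dxi z x).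
Proof.
  intros Hx. apply is_Cderive_Csub; [apply is_Cderive_xi; auto|apply is_Cderive_Ccos_lin].
Qed.

Lemma is_Cderive_F_deriv x : 0 <= x <= PI ->
  is_Cderive (F_deriv dxi z) x (Csub (g x) (Cmul (Cmul s s) (Ffun xi x z))).
Proof.
  intros Hx. eapply is_Cderive_eq_l.
  - apply is_Cderive_Csub; [apply is_Cderive_xi; auto|].
    apply is_Cderive_Cmul; [apply is_Cderive_const|apply is_Cderive_Csin_lin].
  - assert (Hs : Cmul s s = z) by apply Csqrt_sq.
    unfold g, Ffun, V_ext. rewrite clamp_id by auto. fold s.
    generalize (xi x z) (Ccos (Cscal x s)) (Csin (Cscal x s)). rewrite <- Hs.
    intros [a1 a2] [c1 c2] [d1 d2]. destruct s as [s1 s2].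
    unfold Csub, Cadd, Cmul, Cscal, RtoC, Re, Im; cbn [fst snd]. f_equal; ring.
Qed.

Lemma F_source_continuous x : 0 <= x <= PI -> Ccontinuous g x.
Proof.
  intros Hx. apply Ccontinuous_Cscal; [now apply V_ext_continuous|].
  eapply is_Cderive_Ccontinuous. apply is_Cderive_xi; auto.
Qed.

Lemma F_source_le M : (forall x, Rabs (V_ext V x) <= M) -> forall x, 0 <= x <= PI ->
  Cmod (g x) <= M * (Cmod (Ffun xi x z) + exp (Rabs (Im s) * x)).
Proof.
  intros HM x Hx. unfold g. rewrite Cmod_Cscal.
  assert (E : xi x z = Cadd (Ffun xi x z) (Ccos (Cscal x s))).
  { unfold Ffun. fold s. destruct (xi x z), (Ccos (Cscal x s)).
    unfold Cadd, Csub, Re, Im; cbn [fst snd]; f_equal; ring. }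
  pose proof (Cmod_Cadd_le (Ffun xi x z) (Ccos (Cscal x s))).
  pose proof (proj1 (Cmod_Ccos_Csin_le (Cscal x s))). rewrite Im_Cscal_abs in H0 by lra.
  rewrite E. apply Rmult_le_compat; auto using Rabs_pos, Cmod_ge0. lra.
Qed.

Lemma F_bounds M : 0 <= M -> (forall x, Rabs (V_ext V x) <= M) -> forall x, 0 <= x <= PI ->
  Cmod (Ffun xi x z) <= oscillator_const M * exp (Rabs (Im s) * x) /\
  Cmod s * Cmod (Ffun xi x z) <= oscillator_const M * exp (Rabs (Im s) * x) /\
  Cmod (F_deriv dxi z x) <= oscillator_const M * exp (Rabs (Im s) * x).
Proof.
  intros HM0 HM. apply (driven_oscillator_bounds s (fun x => Ffun xi x z) (F_deriv dxi z) g);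
    auto using F_source_continuous, is_Cderive_F, is_Cderive_F_deriv, F_source_le; apply F_initial.
Qed.

Let e := exp (PI * Rabs (Im s)).

Lemma exp_Im_mul_le x : 0 <= x <= PI -> exp (Rabs (Im s) * x) <= e.
Proof. intros Hx. apply exp_le_exp. pose proof (Rabs_pos (Im s)). nra. Qed.

Lemma F_uniform_bounds M : 0 <= M -> (forall x, Rabs (V_ext V x) <= M) -> forall x, 0 <= x <= PI ->
  Cmod (Ffun xi x z) <= oscillator_const M * e /\
  Cmod s * Cmod (Ffun xi x z) <= oscillator_const M * e /\
  Cmod (F_deriv dxi z x) <= oscillator_const M * e /\
  Cmod (Csub (g x) (Cmul (Cmul s s) (Ffun xi x z)))
    <= M * (oscillator_const M + 1) * e + Cmod s * (oscillator_const M * e).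
Proof.
  intros HM0 HM x Hx. pose proof PI_RGT_0.
  pose proof (oscillator_const_nonneg M HM0) as K0.
  pose proof (exp_Im_mul_le x Hx) as Ex. pose proof (exp_pos (Rabs (Im s) * x)).
  destruct (F_bounds M HM0 HM x Hx) as [F1 [F2 F3]].
  assert (G1 : forall X, X <= oscillator_const M * exp (Rabs (Im s) * x) -> X <= oscillator_const M * e)
    by (intros X HX; eapply Rle_trans; [exact HX|]; now apply Rmult_le_compat_l).
  repeat split; auto.
  eapply Rle_trans; [apply Cmod_Csub_le|]. apply Rplus_le_compat.
  - eapply Rle_trans; [apply F_source_le; auto|].
    replace (M * (oscillator_const M + 1) * e) with (M * (oscillator_const M * e + e)) by ring.
    apply Rmult_le_compat_l; auto. apply Rplus_le_compat; auto.
  - rewrite !Cmod_Cmul, Rmult_assoc. apply Rmult_le_compat_l; [apply Cmod_ge0|auto].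
Qed.

End FAsDrivenOscillator.

(** * Integration by parts *)

Lemma sin_INR_mul_PI n : sin (INR n * PI) = 0.
Proof.
  induction n as [|n IH]; [simpl; rewrite Rmult_0_l; apply sin_0|].
  rewrite S_INR, Rmult_plus_distr_r, Rmult_1_l, sin_plus, IH, sin_PI. ring.
Qed.

Lemma abs_div_le_inv u d : 0 < d -> Rabs u <= 1 -> Rabs (u / d) <= / d.
Proof.
  intros Hd Hu. unfold Rdiv. rewrite Rabs_mult, Rabs_inv, (Rabs_right d) by lra.
  pose proof (Rinv_0_lt_compat d Hd). nra.
Qed.

Lemma continuity_pt_sin_mul k t : continuity_pt (fun x => sin (k * x)) t.
Proof. apply is_derive_continuity_pt with (l := k * cos (k * t)). auto_derive; auto. ring. Qed.

Lemma continuity_pt_cos_mul k t : continuity_pt (fun x => cos (k * x)) t.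
Proof. apply is_derive_continuity_pt with (l := - k * sin (k * t)). auto_derive; auto. ring. Qed.

Lemma Cmod_by_parts_le X Y Z : Y = (0, 0) -> Cmod (Csub (Csub X Y) Z) <= Cmod X + Cmod Z.
Proof.
  intros ->. eapply Rle_trans; [apply Cmod_Csub_le|].
  pose proof (Cmod_Csub_le X (0, 0)). rewrite Cmod_0 in H. lra.
Qed.

(* Two integrations by parts against [cos (n x)]: the boundary terms vanish except
   [cos (n PI) dy PI / n^2], because [sin 0 = sin (n PI) = 0] and [dy 0 = 0]. *)
Lemma Cmod_cos_moment_le (y dy ddy : R -> Cx) n B1 B2 : (1 <= n)%nat -> dy 0 = (0, 0) ->
  (forall x, 0 <= x <= PI -> is_Cderive y x (dy x)) ->
  (forall x, 0 <= x <= PI -> is_Cderive dy x (ddy x)) ->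
  (forall x, 0 <= x <= PI -> Ccontinuous ddy x) ->
  Cmod (dy PI) <= B1 -> (forall x, 0 <= x <= PI -> Cmod (ddy x) <= B2) ->
  Cmod (Cint (fun x => Cscal (cos (INR n * x)) (y x)) 0 PI) <= (B1 + PI * B2) / INR n ^ 2.
Proof.
  intros Hn1 dy0 Hy Hdy Hddy HB1 HB2. pose proof PI_RGT_0.
  assert (Hn : 0 < INR n) by (apply lt_0_INR; lia). set (k := INR n) in *.
  set (h := fun x => Cadd (Cscal (sin (k * x) / k) (y x)) (Cscal (cos (k * x) / k ^ 2) (dy x))).
  set (rest := fun x => Cscal (cos (k * x) / k ^ 2) (ddy x)).
  set (h' := fun x => Cadd (Cscal (cos (k * x)) (y x)) (rest x)).
  assert (Cy : forall x, 0 <= x <= PI -> Ccontinuous y x)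
    by (intros; eapply is_Cderive_Ccontinuous; apply Hy; auto).
  assert (Crest : forall x, 0 <= x <= PI -> Ccontinuous rest x).
  { intros x Hx. apply Ccontinuous_Cscal; auto.
    apply continuity_pt_mult; [apply continuity_pt_cos_mul|now apply continuity_pt_const]. }
  assert (Ch' : forall x, 0 <= x <= PI -> Ccontinuous h' x).
  { intros x Hx. apply Ccontinuous_Cadd; auto.
    apply Ccontinuous_Cscal; auto using continuity_pt_cos_mul. }
  assert (Dh : forall x, 0 <= x <= PI -> is_Cderive h x (h' x)).
  { intros x Hx. eapply is_Cderive_eq_l.
    - apply is_Cderive_Cadd; apply is_Cderive_Cscal; auto; auto_derive; auto.
    - unfold h', rest. generalize (y x) (dy x) (ddy x); intros [a1 a2] [b1 b2] [c1 c2].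
      unfold Cadd, Cscal, Re, Im; cbn [fst snd]. f_equal; field; lra. }
  rewrite (Cint_by_parts _ h h' rest); auto; try lra.
  2:{ intros x _. unfold h'. generalize (y x) (rest x); intros [a1 a2] [b1 b2].
    unfold Cadd, Cscal, Csub, Re, Im; cbn [fst snd]. f_equal; ring. }
  assert (Hh0 : h 0 = (0, 0)).
  { unfold h. rewrite dy0, Rmult_0_r, sin_0, cos_0.
    unfold Cadd, Cscal, Re, Im; cbn [fst snd]. f_equal; field; lra. }
  assert (HhPI : Cmod (h PI) <= / k ^ 2 * B1).
  { unfold h, k. rewrite sin_INR_mul_PI. fold k.
    replace (Cscal (0 / k) (y PI)) with (0, 0)
      by (unfold Cscal, Re, Im; cbn [fst snd]; f_equal; field; lra).
    eapply Rle_trans; [apply Cmod_Cadd_le|]. rewrite Cmod_0, Rplus_0_l.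
    apply Cmod_Cscal_le; auto. apply abs_div_le_inv; [nra|apply Rabs_le, COS_bound]. }
  assert (Hrest : Cmod (CRInt rest 0 PI) <= (PI - 0) * (/ k ^ 2 * B2)).
  { apply Cmod_CRInt_le_const; [lra|auto|]. intros x Hx.
    apply Cmod_Cscal_le; auto. apply abs_div_le_inv; [nra|apply Rabs_le, COS_bound]. }
  eapply Rle_trans; [now apply Cmod_by_parts_le|]. replace ((B1 + PI * B2) / k ^ 2) with (/ k ^ 2 * B1 + (PI - 0) * (/ k ^ 2 * B2))
    by (field; lra). lra.
Qed.

Definition neg_cos_div (k x : R) : R := - cos (k * x) / k.

Lemma is_derive_neg_cos_div k x : 0 < k -> is_derive (neg_cos_div k) x (sin (k * x)).
Proof. intros Hk. unfold neg_cos_div. eapply is_derive_eq_l; [auto_derive; auto|]. field. lra. Qed.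

Lemma abs_neg_cos_div_le k x : 0 < k -> Rabs (neg_cos_div k x) <= / k.
Proof.
  intros Hk. unfold neg_cos_div. apply abs_div_le_inv; auto.
  rewrite Rabs_Ropp. apply Rabs_le, COS_bound.
Qed.

Section RhoWeight.

Variables (V : R -> R) (M k : R).
Hypotheses (hV : abs_continuous_on V 0 PI) (HM : forall x, Rabs (V_ext V x) <= M) (Hk : 0 < k).

Definition rho_weight x := rho_ext V x * neg_cos_div k x.
Definition rho_weight_deriv_part x := rho_ext_deriv V x * neg_cos_div k x.

Lemma is_derive_rho_weight x :
  is_derive rho_weight x (rho_weight_deriv_part x + rho_ext V x * sin (k * x)).
Proof. apply is_derive_Rmult; auto using is_derive_rho_ext, is_derive_neg_cos_div. Qed.

Lemma continuity_pt_rho_weight_deriv_part x : continuity_pt rho_weight_deriv_part x.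
Proof.
  apply continuity_pt_mult; [now apply continuity_pt_rho_ext_deriv|].
  eapply is_derive_continuity_pt; now apply is_derive_neg_cos_div.
Qed.

Lemma abs_rho_weight_le x : 0 <= x <= PI -> Rabs (rho_weight x) <= PI * M * / k.
Proof.
  intros Hx. unfold rho_weight. rewrite Rabs_mult.
  apply Rmult_le_compat; auto using Rabs_pos, abs_rho_ext_le, abs_neg_cos_div_le.
Qed.

Lemma abs_rho_weight_deriv_part_le x : Rabs (rho_weight_deriv_part x) <= M * / k.
Proof.
  unfold rho_weight_deriv_part. rewrite Rabs_mult.
  apply Rmult_le_compat; auto using Rabs_pos, abs_rho_ext_deriv_le, abs_neg_cos_div_le.
Qed.

End RhoWeight.

(* One integration by parts against [rho (x) sin (n x)], with [-cos (n x) / n] as primitive of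
   [sin (n x)]; the boundary term at [0] vanishes since [rho 0 = 0]. *)
Lemma Cmod_rho_sin_moment_le V M (w dw : R -> Cx) a n A B :
  abs_continuous_on V 0 PI -> (forall x, Rabs (V_ext V x) <= M) -> 0 < a <= PI -> (1 <= n)%nat ->
  (forall x, 0 <= x <= a -> is_Cderive w x (dw x)) ->
  (forall x, 0 <= x <= a -> Ccontinuous dw x) ->
  (forall x, 0 <= x <= a -> Cmod (w x) <= A) -> (forall x, 0 <= x <= a -> Cmod (dw x) <= B) ->
  Cmod (Cint (fun x => Cscal (rho V x * sin (INR n * x)) (w x)) 0 a) <= PI * M * (2 * A + PI * B) / INR n.
Proof.
  intros hV HM Ha Hn1 Hw Hdw HA HB. pose proof PI_RGT_0.
  assert (Hn : 0 < INR n) by (apply lt_0_INR; lia). set (k := INR n) in *.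
  assert (M0 : 0 <= M) by (pose proof (HM 0); pose proof (Rabs_pos (V_ext V 0)); lra).
  assert (A0 : 0 <= A) by (pose proof (HA 0 ltac:(lra)); pose proof (Cmod_ge0 (w 0)); lra).
  assert (B0 : 0 <= B) by (pose proof (HB 0 ltac:(lra)); pose proof (Cmod_ge0 (dw 0)); lra).
  set (r := rho_weight V k). set (q := rho_weight_deriv_part V k).
  assert (Cw : forall x, 0 <= x <= a -> Ccontinuous w x)
    by (intros; eapply is_Cderive_Ccontinuous; apply Hw; auto).
  assert (Cr : forall x, continuity_pt r x)
    by (intros x; exact (is_derive_continuity_pt _ _ _ (is_derive_rho_weight V k hV Hn x))).
  set (rest := fun x => Cadd (Cscal (q x) (w x)) (Cscal (r x) (dw x))).
  set (h' := fun x => Cadd (Cscal (q x + rho_ext V x * sin (k * x)) (w x)) (Cscal (r x) (dw x))).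
  assert (Dh : forall x, 0 <= x <= a -> is_Cderive (fun t => Cscal (r t) (w t)) x (h' x))
    by (intros; apply is_Cderive_Cscal; [apply is_derive_rho_weight|apply Hw]; auto).
  assert (Crest : forall x, 0 <= x <= a -> Ccontinuous rest x).
  { intros; apply Ccontinuous_Cadd; apply Ccontinuous_Cscal; auto.
    now apply continuity_pt_rho_weight_deriv_part. }
  assert (Ch' : forall x, 0 <= x <= a -> Ccontinuous h' x).
  { intros; apply Ccontinuous_Cadd; apply Ccontinuous_Cscal; auto.
    apply continuity_pt_plus; [now apply continuity_pt_rho_weight_deriv_part|].
    apply continuity_pt_mult; auto using continuity_pt_sin_mul.
    eapply is_derive_continuity_pt, is_derive_rho_ext; auto. }
  rewrite (Cint_by_parts _ (fun x => Cscal (r x) (w x)) h' rest); auto; try lra.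
  2:{ intros x Hx. unfold h', rest, q, r, rho_weight_deriv_part, rho_weight.
      rewrite rho_rho_ext by (auto; lra). generalize (w x) (dw x); intros [a1 a2] [b1 b2].
      unfold Cadd, Cscal, Csub, Re, Im; cbn [fst snd]. f_equal; ring. }
  eapply Rle_trans; [apply Cmod_by_parts_le|].
  { unfold r, rho_weight. rewrite rho_ext_0, Rmult_0_l. unfold Cscal, Re, Im; cbn [fst snd].
    f_equal; ring. }
  assert (Hha : Cmod (Cscal (r a) (w a)) <= PI * M * / k * A)
    by (apply Cmod_Cscal_le; [apply abs_rho_weight_le|apply HA]; auto; lra).
  assert (Hrest : Cmod (CRInt rest 0 a) <= (a - 0) * (M * / k * A + PI * M * / k * B)).
  { apply Cmod_CRInt_le_const; [lra|auto|]. intros x Hx.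
    eapply Rle_trans; [apply Cmod_Cadd_le|].
    apply Rplus_le_compat; apply Cmod_Cscal_le; auto.
    - now apply abs_rho_weight_deriv_part_le.
    - apply abs_rho_weight_le; auto; lra. }
  pose proof (Rinv_0_lt_compat k Hn).
  assert (0 <= M * / k * A + PI * M * / k * B).
  { assert (0 <= M * / k) by nra. assert (0 <= PI * M * / k) by nra. nra. }
  assert ((a - 0) * (M * / k * A + PI * M * / k * B) <= PI * (M * / k * A + PI * M * / k * B)) by nra.
  replace (PI * M * (2 * A + PI * B) / k)
    with (PI * M * / k * A + PI * (M * / k * A + PI * M * / k * B)) by (field; lra).
  lra.
Qed.

Lemma affine_le_growth_factor t c A B : 0 <= t -> 0 <= c -> 0 <= A -> 0 <= B ->
  A + B * t <= (2 * PI * (A + B) + 1) * (1 + (c + t ^ 2) / (1 + PI * t)).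
Proof.
  intros Ht Hc HA HB. pose proof PI2_1.
  assert (Hd : 0 < 1 + PI * t) by nra.
  set (Q := (c + t ^ 2) / (1 + PI * t)).
  assert (HQ : Q * (1 + PI * t) = c + t ^ 2) by (unfold Q; field; lra).
  assert (Q0 : 0 <= Q) by (unfold Q; apply Rdiv_le_0_compat; nra).
  assert (K1 : 1 + t <= 2 * PI * (1 + Q)).
  { apply Rmult_le_reg_r with (1 + PI * t); auto.
    replace (2 * PI * (1 + Q) * (1 + PI * t)) with (2 * PI * (1 + PI * t) + 2 * PI * (Q * (1 + PI * t)))
      by ring.
    rewrite HQ. nra. }
  assert (A + B * t <= (A + B) * (1 + t)) by nra.
  assert ((A + B) * (1 + t) <= (A + B) * (2 * PI * (1 + Q))) by (apply Rmult_le_compat_l; lra).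
  nra.
Qed.

Lemma le_scaled_bound X e d P Q C : 0 < e -> 0 < d -> P <= C * Q -> X <= e / d * P ->
  X <= C * e / d * Q.
Proof.
  intros He Hd HP HX. eapply Rle_trans; [exact HX|].
  replace (C * e / d * Q) with (e / d * (C * Q)) by (field; lra).
  apply Rmult_le_compat_l; [apply Rdiv_le_0_compat|]; lra.
Qed.

Lemma Cmod_Csqrt_sq z : Cmod z = Cmod (Csqrt z) ^ 2.
Proof. rewrite Cmod_Csqrt, pow2_sqrt; auto using Cmod_ge0. Qed.

Lemma F_cos_moment_estimate V xi dxi : abs_continuous_on V 0 PI -> is_xi V xi dxi ->
  exists C1, 0 < C1 /\
    forall (z : Cx) (n : nat), (1 <= n)%nat ->
      Cmod (Cint (fun x => Cscal (cos (INR n * x)) (Ffun xi x z)) 0 PI)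
      <= C1 * exp (PI * Rabs (Im (Csqrt z))) / (INR n ^ 2)
         * (1 + (1 + Cmod z) / (1 + PI * sqrt (Cmod z))).
Proof.
  intros hV hxi. pose proof PI_RGT_0.
  destruct (V_ext_bounded V hV) as [M [HM0 HM]].
  pose proof (oscillator_const_nonneg M HM0) as K0. set (K := oscillator_const M) in *.
  set (A := K + PI * M * (K + 1)). set (B := PI * K).
  assert (A0 : 0 <= A)
    by (unfold A; assert (0 <= PI * M * (K + 1)) by (apply Rmult_le_pos; nra); lra).
  assert (B0 : 0 <= B) by (unfold B; nra).
  exists (2 * PI * (A + B) + 1). split; [nra|]. intros z n Hn.
  assert (Hk : 0 < INR n) by (apply lt_0_INR; lia).
  rewrite <- (Cmod_Csqrt z), (Cmod_Csqrt_sq z). set (t := Cmod (Csqrt z)).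
  apply le_scaled_bound with (P := A + B * t); [apply exp_pos|nra|
    apply affine_le_growth_factor; unfold t; auto using Cmod_ge0; lra|].
  pose proof (F_uniform_bounds V xi dxi z hV hxi M HM0 HM) as FB. fold K t in FB.
  set (e := exp (PI * Rabs (Im (Csqrt z)))) in *.
  eapply Rle_trans.
  - apply (Cmod_cos_moment_le (fun x => Ffun xi x z) (F_deriv dxi z)
             (fun x => Csub (Cscal (V_ext V x) (xi x z)) (Cmul (Cmul (Csqrt z) (Csqrt z)) (Ffun xi x z)))
             n (K * e)
             (M * (K + 1) * e + t * (K * e))); auto.
    + exact (proj2 (F_initial V xi dxi z hxi)).
    + intros; eapply is_Cderive_F; eauto.
    + intros; apply is_Cderive_F_deriv; auto.
    + intros x Hx. apply Ccontinuous_Csub; [eapply F_source_continuous; eauto|].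
      apply Ccontinuous_Cmul; [apply Ccontinuous_const|].
      eapply is_Cderive_Ccontinuous, is_Cderive_F; eauto.
    + apply FB; lra.
    + intros x Hx. apply FB; lra.
  - right. unfold A, B. field. lra.
Qed.

Lemma rho_cos_sin_moment_estimate V a : abs_continuous_on V 0 PI -> 0 < a <= PI ->
  exists C2, 0 < C2 /\
    forall (z : Cx) (n : nat), (1 <= n)%nat ->
      Cmod (Cint (fun x => Cscal (rho V x * sin (INR n * x)) (Ccos (Cscal x (Csqrt z)))) 0 a)
      <= C2 * exp (PI * Rabs (Im (Csqrt z))) / INR n * (1 + Cmod z / (1 + PI * sqrt (Cmod z))).
Proof.
  intros hV Ha. pose proof PI_RGT_0.
  destruct (V_ext_bounded V hV) as [M [HM0 HM]].
  set (A := 2 * PI * M). set (B := PI * PI * M).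
  assert (A0 : 0 <= A) by (unfold A; nra). assert (B0 : 0 <= B) by (unfold B; nra).
  exists (2 * PI * (A + B) + 1). split; [nra|]. intros z n Hn.
  assert (Hk : 0 < INR n) by (apply lt_0_INR; lia).
  rewrite <- (Cmod_Csqrt z), (Cmod_Csqrt_sq z). set (s := Csqrt z). set (t := Cmod s).
  assert (t0 : 0 <= t) by apply Cmod_ge0.
  apply le_scaled_bound with (P := A + B * t); [apply exp_pos|nra|
    rewrite <- (Rplus_0_l (t ^ 2)); apply affine_le_growth_factor; auto; lra|].
  set (e := exp (PI * Rabs (Im s))).
  assert (Hexp : forall x, 0 <= x <= a -> exp (Rabs (Im (Cscal x s))) <= e).
  { intros x Hx. rewrite Im_Cscal_abs by lra. apply exp_le_exp. pose proof (Rabs_pos (Im s)). nra. }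
  eapply Rle_trans.
  - apply (Cmod_rho_sin_moment_le V M _ (fun x => Cmul (Cscal (-1) s) (Csin (Cscal x s))) a n e (t * e));
      auto.
    + intros; apply is_Cderive_Ccos_lin.
    + intros; eapply is_Cderive_Ccontinuous. eapply is_Cderive_eq_l.
      * apply is_Cderive_Cmul; [apply is_Cderive_const|apply is_Cderive_Csin_lin].
      * reflexivity.
    + intros x Hx. eapply Rle_trans; [apply Cmod_Ccos_Csin_le|]. now apply Hexp.
    + intros x Hx. rewrite Cmod_Cmul, Cmod_Cscal.
      replace (Rabs (-1)) with 1 by (rewrite Rabs_left; lra). rewrite Rmult_1_l.
      apply Rmult_le_compat_l; auto. eapply Rle_trans; [apply Cmod_Ccos_Csin_le|]. now apply Hexp.
  - right. unfold A, B. field. lra.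
Qed.

Lemma rho_F_sin_moment_estimate V xi dxi a : abs_continuous_on V 0 PI -> is_xi V xi dxi ->
  0 < a <= PI -> exists C3, 0 < C3 /\
    forall (z : Cx) (n : nat), (1 <= n)%nat ->
      Cmod (Cint (fun x => Cscal (rho V x * sin (INR n * x)) (Ffun xi x z)) 0 a)
      <= C3 * exp (PI * Rabs (Im (Csqrt z))) / INR n * (1 + 1 / (1 + PI * sqrt (Cmod z))).
Proof.
  intros hV hxi Ha. pose proof PI_RGT_0.
  destruct (V_ext_bounded V hV) as [M [HM0 HM]].
  pose proof (oscillator_const_nonneg M HM0) as K0. set (K := oscillator_const M) in *.
  set (A := PI * M * (2 * K + PI * K)).
  assert (A0 : 0 <= A) by (unfold A; apply Rmult_le_pos; nra).
  exists (A + 1). split; [lra|]. intros z n Hn.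
  assert (Hk : 0 < INR n) by (apply lt_0_INR; lia).
  assert (0 <= 1 / (1 + PI * sqrt (Cmod z))) by (apply Rdiv_le_0_compat; pose proof (sqrt_pos (Cmod z)); nra).
  apply le_scaled_bound with (P := A); [apply exp_pos|nra|nra|].
  pose proof (F_uniform_bounds V xi dxi z hV hxi M HM0 HM) as FB. fold K in FB.
  set (e := exp (PI * Rabs (Im (Csqrt z)))) in *.
  eapply Rle_trans.
  - apply (Cmod_rho_sin_moment_le V M (fun x => Ffun xi x z) (F_deriv dxi z) a n (K * e) (K * e));
      auto.
    + intros; eapply is_Cderive_F; eauto; lra.
    + intros; eapply is_Cderive_Ccontinuous, is_Cderive_F_deriv; eauto; lra.
    + intros x Hx. apply FB; lra.
    + intros x Hx. apply FB; lra.
  - right. unfold A. field. lra.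
Qed.

Theorem lemmaA4 (V : R -> R) (xi dxi : R -> Cx -> Cx)
  (hV : abs_continuous_on V 0 PI) (hxi : is_xi V xi dxi) :
  (exists C1, 0 < C1 /\
     forall (z : Cx) (n : nat), (1 <= n)%nat ->
       Cmod (Cint (fun x => Cscal (cos (INR n * x)) (Ffun xi x z)) 0 PI)
       <= C1 * exp (PI * Rabs (Im (Csqrt z))) / (INR n ^ 2)
          * (1 + (1 + Cmod z) / (1 + PI * sqrt (Cmod z)))) /\
  (forall a, 0 < a <= PI ->
     exists C2 C3, 0 < C2 /\ 0 < C3 /\
     forall (z : Cx) (n : nat), (1 <= n)%nat ->
       Cmod (Cint (fun x => Cscal (rho V x * sin (INR n * x))
                                  (Ccos (Cscal x (Csqrt z)))) 0 a)
       <= C2 * exp (PI * Rabs (Im (Csqrt z))) / INR n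
          * (1 + Cmod z / (1 + PI * sqrt (Cmod z))) /\
       Cmod (Cint (fun x => Cscal (rho V x * sin (INR n * x)) (Ffun xi x z)) 0 a)
       <= C3 * exp (PI * Rabs (Im (Csqrt z))) / INR n
          * (1 + 1 / (1 + PI * sqrt (Cmod z)))).
Proof.
  split; [now apply (F_cos_moment_estimate V xi dxi)|].
  intros a Ha.
  destruct (rho_cos_sin_moment_estimate V a hV Ha) as [C2 [HC2 H2]].
  destruct (rho_F_sin_moment_estimate V xi dxi a hV hxi Ha) as [C3 [HC3 H3]].
  exists C2, C3. repeat split; auto.
Qed.
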